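(* Let $\|\cdot\|$ be a norm on $\mathbb{R}^d$ with $\|x\|\le\mu\|x\|_2$ for all $x$, and let $T:\mathbb{R}^d\to\mathbb{R}^d$ be a $\gamma$-contraction ($\gamma\in(0,1)$) with unique fixed point $x^*$. Let $\tilde T(x,\xi)$, $\xi\sim\mathcal{D}_x$, be a stochastic oracle with $\mathbb{E}(\tilde T(x,\xi))=Tx$ and $\sup_x\mathbb{E}(\|\tilde T(x,\xi)-Tx\|_2^2)\le\sigma^2$. Let $\varepsilon>0$ and $N=\left\lceil\frac{\|x^0-x^*\|+2\mu\sigma}{\varepsilon(1-\gamma)}\right\rceil$. Consider the stochastic Halpern method: for $n=1,\dots,N$, draw $k_n$ independent samples $\xi_{n,1},\dots,\xi_{n,k_n}\sim\mathcal{D}_{x^{n-1}}$ and set $x^n=(1-\beta_n)x^0+\beta_n\frac{1}{k_n}\sum_{j=1}^{k_n}\tilde T(x^{n-1},\xi_{n,j})$, with $\beta_n=\frac{n}{n+1}$ and $k_n=\lceil n^2\gamma^{N-n}\rceil$. Then the returned $x^N$ satisfies $\mathbb{E}(\|x^N-x^*\|)\le\varepsilon$, and the method uses at most $O\!\left(\frac{\|x^0-x^*\|^2+\mu^2\sigma^2}{\varepsilon^2(1-\gamma)^3}\right)$ queries to $\tilde T$.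
   Context: $\|\cdot\|_2$ is the Euclidean norm; the number of queries is $\sum_{n=1}^N k_n$. *)

From HB Require Import structures.
From mathcomp Require Import all_boot all_order all_algebra.
From mathcomp Require Import all_classical all_reals all_analysis.
From mathcomp Require Import measurable_realfun.
Set Implicit Arguments. Unset Strict Implicit. Unset Printing Implicit Defensive.
Import Order.TTheory GRing.Theory Num.Theory.
Import numFieldNormedType.Exports.
Local Open Scope classical_set_scope.
Local Open Scope ring_scope.

(* For measurability we transport
   to d.-tuple R, which MathComp-Analysis equips with the product (= Borel)
   sigma-algebra generated by the coordinate projections. *)
Definition tup_of_rV (R : realType) (d : nat) (x : 'rV[R]_d) : d.-tuple R :=
  [tuple x ord0 i | i < d].
Definition rV_of_tup (R : realType) (d : nat) (t : d.-tuple R) : 'rV[R]_d :=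
  \row_i tnth t i.

Definition eucl (R : realType) (d : nat) (x : 'rV[R]_d) : R :=
  Num.sqrt (\sum_(i < d) x ord0 i ^+ 2).

Definition is_norm_Rd (R : realType) (d : nat) (nrm : 'rV[R]_d -> R) : Prop :=
  [/\ forall x, nrm x = 0 -> x = 0,
      forall (a : R) x, nrm (a *: x) = `|a| * nrm x
    & forall x y, nrm (x + y) <= nrm x + nrm y].

Definition gamma_contraction (R : realType) (d : nat) (nrm : 'rV[R]_d -> R)
  (gamma : R) (T : 'rV[R]_d -> 'rV[R]_d) : Prop :=
  0 < gamma < 1 /\ forall x y, nrm (T x - T y) <= gamma * nrm (x - y).

Definition ceil_nat (R : realType) (r : R) : nat := `|Num.ceil r|%N.

(* Expectation (of a nonnegative extended-real functional) over k independent
   samples xi_1, ..., xi_k ~ mu, as the iterated integral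
   \int mu(dxi_1) ... \int mu(dxi_k) h [:: xi_1; ...; xi_k]. *)
Fixpoint iid_int (dX : measure_display) (Xi : measurableType dX) (R : realType)
  (mu : probability Xi R) (k : nat) (h : seq Xi -> \bar R) : \bar R :=
  match k with
  | 0 => h [::]
  | k'.+1 => (\int[mu]_xi iid_int mu k' (fun s => h (xi :: s)))%E
  end.

Definition halpern_update (R : realType) (d : nat) (dX : measure_display)
  (Xi : measurableType dX) (Ttil : 'rV[R]_d -> Xi -> 'rV[R]_d)
  (x0 : 'rV[R]_d) (beta : nat -> R) (k : nat -> nat)
  (n : nat) (x : 'rV[R]_d) (s : seq Xi) : 'rV[R]_d :=
  (1 - beta n) *: x0 + beta n *: ((k n)%:R^-1 *: \sum_(xi <- s) Ttil x xi).

(* Expectation of f(x^{n+m-1}) for the stochastic Halpern chain started at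
   state x = x^{n-1} and run for iterations n, n+1, ..., n+m-1, where at
   iteration j a fresh batch of k_j independent samples is drawn from
   D (x^{j-1}).  (Ionescu-Tulcea / iterated-kernel form of the expectation.) *)
Fixpoint halpern_expect (R : realType) (d : nat) (dX : measure_display)
  (Xi : measurableType dX) (D : 'rV[R]_d -> probability Xi R)
  (Ttil : 'rV[R]_d -> Xi -> 'rV[R]_d) (x0 : 'rV[R]_d)
  (beta : nat -> R) (k : nat -> nat) (f : 'rV[R]_d -> \bar R)
  (m n : nat) (x : 'rV[R]_d) : \bar R :=
  match m with
  | 0 => f x
  | m'.+1 => iid_int (D x) (k n)
      (fun s => halpern_expect D Ttil x0 beta k f m' n.+1
                  (halpern_update Ttil x0 beta k n x s))
  end.

From HB Require Import structures.
From mathcomp Require Import all_boot all_order all_algebra.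
From mathcomp Require Import all_classical all_reals all_analysis.
From mathcomp Require Import measurable_realfun.
From mathcomp Require Import ring lra.

Set Implicit Arguments.
Unset Strict Implicit.
Unset Printing Implicit Defensive.
Import Order.TTheory GRing.Theory Num.Theory.
Import numFieldNormedType.Exports.
Local Open Scope classical_set_scope.
Local Open Scope ring_scope.

(* Write r_n = ||x^n - x^*||.  Since x^* = (1 - beta_n) x^* + beta_n T x^*, one step
   of the iteration gives
     r_n <= (1 - beta_n) r_0 + beta_n gamma r_(n-1) + beta_n mu ||e_n||_2,
   where e_n is the mean of k_n independent centred oracle errors, so that
   E ||e_n||_2 <= sigma / sqrt k_n.  As (n+1) beta_n = n and (n+1) (1 - beta_n) = 1,
   multiplying the n-th inequality by (n+1) gamma^(N-n) and chaining them gives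
     (N+1) E r_N <= r_0 sum_(i <= N) gamma^i
                    + mu sigma sum_(n <= N) gamma^(N-n) n / sqrt k_n.
   The choice k_n >= n^2 gamma^(N-n) bounds the last sum by
   sum_i (sqrt gamma)^i <= 2 / (1 - gamma), whence
   E r_N <= (r_0 + 2 mu sigma) / ((N+1) (1 - gamma)) <= eps.  The query count is
   sum_n k_n <= N^2 / (1 - gamma) + N, where
   N <= 2 (r_0 + 2 mu sigma) / (eps (1 - gamma)) once eps (1 - gamma) <= r_0 + 2 mu sigma.
   The expectations are iterated integrals over the batches; the argument only uses
   monotonicity of the integral of nonnegative functions and linearity over a single
   sample. *)

Lemma sum_expr_le (R : realFieldType) (q : R) m : 0 <= q < 1 ->
  \sum_(i < m) q ^+ i <= (1 - q)^-1.
Proof.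
move=> /andP[q0 q1]; rewrite -[leRHS]mul1r ler_pdivlMr ?subr_gt0 //.
have -> : (\sum_(i < m) q ^+ i) * (1 - q) = 1 - q ^+ m.
  by apply: oppr_inj; rewrite opprB subrX1 mulrC -mulNr opprB.
by rewrite gerBl exprn_ge0.
Qed.

Lemma sum_sqrt_expr_le (R : realType) (q : R) m : 0 <= q < 1 ->
  \sum_(i < m) Num.sqrt q ^+ i <= 2 / (1 - q).
Proof.
move=> /andP[q0 q1]; set s := Num.sqrt q.
have s0 : 0 <= s := sqrtr_ge0 q.
have s1 : s < 1 by rewrite -sqrtr1 ltr_sqrt.
apply: le_trans (sum_expr_le _ _) _; first by rewrite s0.
have -> : 1 - q = (1 - s) * (1 + s) by rewrite -subr_sqr expr1n sqr_sqrtr.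
rewrite ler_pdivlMr ?mulr_gt0 ?subr_gt0 ?ltr_wpDr // mulrA mulVf ?mul1r; lra.
Qed.

Lemma ceil_nat_ge (R : realType) (r : R) : r <= (ceil_nat r)%:R.
Proof.
have [r0|r0] := leP 0 r; last by apply: le_trans (ltW r0) _.
by rewrite /ceil_nat natr_absz ger0_norm ?ceil_ge // ceil_ge0; lra.
Qed.

Lemma ceil_nat_lt (R : realType) (r : R) : 0 <= r -> (ceil_nat r)%:R < r + 1.
Proof.
move=> r0; rewrite /ceil_nat natr_absz ger0_norm ?ceil_ge0; last lra.
by rewrite -ltrBlDr; have := ceilB1_lt r; rewrite intrB.
Qed.

Lemma le_mul_ceil_nat (R : realType) (a c : R) : 0 < c ->
  a <= c * (ceil_nat (a / c))%:R.
Proof. by move=> c0; rewrite -ler_pdivrMl // mulrC ceil_nat_ge. Qed.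

Lemma lee_affine_right_limit (R : realType) (x : \bar R) (a b c s : R) :
  0 <= b -> 0 < c -> (forall t, s < t -> (x <= ((a + b * t) / c)%:E)%E) ->
  (x <= ((a + b * s) / c)%:E)%E.
Proof.
move=> b0 c0 x_le; apply/lee_addgt0Pr => e e0.
have b1 : 0 < b + 1 by lra.
apply: le_trans (x_le (s + e * c / (b + 1)) _) _.
  by rewrite ltrDl divr_gt0 // mulr_gt0.
rewrite -EFinD lee_fin mulrDr addrA mulrDl lerD2l.
rewrite (_ : _ / c = e * (b / (b + 1))); last by field; rewrite !gt_eqF.
by rewrite ler_piMr ?ltW // ltr_pdivrMr // mul1r ltrDl.
Qed.

Section EuclideanNorm.
Context (R : realType) (d : nat).
Implicit Types v w : 'rV[R]_d.

Lemma eucl_ge0 w : 0 <= eucl w.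
Proof. exact: sqrtr_ge0. Qed.

Lemma sqr_eucl w : eucl w ^+ 2 = \sum_(i < d) w ord0 i ^+ 2.
Proof. by rewrite sqr_sqrtr // sumr_ge0 // => i _; rewrite sqr_ge0. Qed.

Lemma eucl0 : eucl (0 : 'rV[R]_d) = 0.
Proof. by rewrite /eucl big1 ?sqrtr0 // => i _; rewrite mxE expr0n. Qed.

Lemma sqr_euclD v w : eucl (v + w) ^+ 2 =
  eucl v ^+ 2 + \sum_(i < d) 2 * v ord0 i * w ord0 i + eucl w ^+ 2.
Proof.
rewrite !sqr_eucl -!big_split; apply: eq_bigr => i _ /=.
by rewrite mxE sqrrD -mulrA mulr_natl.
Qed.

End EuclideanNorm.

Section NormRd.
Context (R : realType) (d : nat) (nrm : 'rV[R]_d -> R).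
Hypothesis nrm_norm : is_norm_Rd nrm.

Lemma nrmZ a x : nrm (a *: x) = `|a| * nrm x.
Proof. by case: nrm_norm. Qed.

Lemma nrmD x y : nrm (x + y) <= nrm x + nrm y.
Proof. by case: nrm_norm. Qed.

Lemma nrm_ge0 x : 0 <= nrm x.
Proof.
have nrm0 : nrm 0 = 0 by rewrite -(scale0r 0) nrmZ normr0 mul0r.
by have := nrmD x (- x); rewrite subrr nrm0 -scaleN1r nrmZ normrN normr1; lra.
Qed.

End NormRd.

Section IteratedIntegral.
Context (dX : measure_display) (Xi : measurableType dX) (R : realType).
Local Open Scope ereal_scope.

Lemma ge0_le_integralT (mu : {measure set Xi -> \bar R}) (f g : Xi -> \bar R) :
  (forall x, 0 <= f x) -> (forall x, f x <= g x) ->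
  \int[mu]_x f x <= \int[mu]_x g x.
Proof.
move=> f0 fg; have g0 x : 0 <= g x by exact: le_trans (f0 x) (fg x).
rewrite !ge0_integralTE //; apply: ereal_sup_le => _ [h hf <-].
by exists h => //= x; exact: le_trans (hf x) (fg x).
Qed.

Lemma iid_int_ge0 (P : probability Xi R) k h :
  (forall s, 0 <= h s) -> 0 <= iid_int P k h.
Proof.
elim: k h => [|k IH] h h0 /=; first exact: h0.
by apply: integral_ge0 => x _; exact: IH.
Qed.

Lemma iid_int_le (P : probability Xi R) k h1 h2 :
  (forall s, 0 <= h1 s) -> (forall s, size s = k -> h1 s <= h2 s) ->
  iid_int P k h1 <= iid_int P k h2.
Proof.
elim: k h1 h2 => [|k IH] h1 h2 h10 h12 /=; first exact: h12.
apply: ge0_le_integralT => x; first exact: iid_int_ge0.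
by apply: IH => // s sk; apply: h12; rewrite /= sk.
Qed.

End IteratedIntegral.

Section CenteredNoise.
Context (dX : measure_display) (Xi : measurableType dX) (R : realType) (d : nat).
Variables (P : probability Xi R) (Y : Xi -> 'rV[R]_d) (sigma : R).
Hypothesis Y_int : forall i, P.-integrable setT (fun xi => (Y xi ord0 i)%:E).
Hypothesis Y_mean0 : forall i, (\int[P]_xi (Y xi ord0 i)%:E = 0)%E.
Hypothesis Y_var : (\int[P]_xi (eucl (Y xi) ^+ 2)%:E <= (sigma ^+ 2)%:E)%E.

Let sqr_eucl_Y_int : P.-integrable setT (fun xi => (eucl (Y xi) ^+ 2)%:E).
Proof.
apply/integrableP; split.
  apply/measurable_EFinP; rewrite (funext (fun xi => sqr_eucl (Y xi))).
  apply: measurable_sum => i; apply: measurable_funX.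
  exact/measurable_EFinP/(measurable_int _ (Y_int i)).
under eq_integral do rewrite /= ger0_norm ?sqr_ge0 //.
exact: le_lt_trans Y_var (ltry _).
Qed.

Lemma integral_sqr_euclD_le (a b : R) (v : 'rV[R]_d) : 0 <= b ->
  (\int[P]_xi (a + b * eucl (v + Y xi) ^+ 2)%:E
    <= (a + b * (eucl v ^+ 2 + sigma ^+ 2))%:E)%E.
Proof.
move=> b0.
pose c := a + b * eucl v ^+ 2.
pose lin xi := (\sum_(i < d) (b * (2 * v ord0 i))%:E * (Y xi ord0 i)%:E)%E.
have expand xi : (a + b * eucl (v + Y xi) ^+ 2)%:E =
    (cst c%:E xi + lin xi + b%:E * (eucl (Y xi) ^+ 2)%:E)%E.
  rewrite /lin; under eq_bigr do rewrite -EFinM.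
  rewrite sumEFin -EFinM -!EFinD sqr_euclD /c; congr EFin.
  under [in RHS]eq_bigr do rewrite -mulrA.
  by rewrite -mulr_sumr; ring.
have lin_int : P.-integrable setT lin.
  by apply: (integrable_sum measurableT) => i _; exact: integrableZl.
have cst_int : P.-integrable setT (cst c%:E) by exact: finite_measure_integrable_cst.
under eq_integral => xi _ do rewrite expand.
rewrite integralD //; last 2 first.
- exact: integrableD.
- exact: integrableZl.
rewrite integralD // integral_cst //= probability_setT mule1.
rewrite integral_sum //; last by move=> i; exact: integrableZl.
rewrite big1 ?adde0; last by move=> i _; rewrite integralZl // Y_mean0 mule0.
rewrite integralZl // (_ : a + _ = c + b * sigma ^+ 2); last by rewrite /c; ring.
rewrite [leRHS]EFinD; apply: leeD; first by [].
by rewrite EFinM lee_wpmul2l // lee_fin.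
Qed.

Lemma iid_int_sqr_eucl_sum_le k (a b : R) (v : 'rV[R]_d) : 0 <= a -> 0 <= b ->
  (iid_int P k (fun s => (a + b * eucl (v + \sum_(xi <- s) Y xi) ^+ 2)%:E)
   <= (a + b * (eucl v ^+ 2 + k%:R * sigma ^+ 2))%:E)%E.
Proof.
move=> a0 b0; elim: k v => [|k IH] v /=.
  by rewrite big_nil addr0 mul0r addr0.
pose a' := a + b * (k%:R * sigma ^+ 2).
apply: (@le_trans _ _ (\int[P]_xi (a' + b * eucl (v + Y xi) ^+ 2)%:E)%E).
  apply: ge0_le_integralT => xi.
    by apply: iid_int_ge0 => s; rewrite lee_fin addr_ge0 // mulr_ge0 ?sqr_ge0.
  under eq_fun do rewrite big_cons addrA.
  by apply: le_trans (IH _) _; rewrite lee_fin /a'; lra.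
apply: le_trans (integral_sqr_euclD_le a' v b0) _.
by rewrite lee_fin /a' -[k.+1]addn1 natrD; lra.
Qed.

Lemma iid_int_eucl_sum_le k (a b tau : R) : (0 < k)%N -> 0 <= a -> 0 <= b ->
  0 <= sigma -> sigma < tau ->
  (iid_int P k (fun s => (a + b * eucl (\sum_(xi <- s) Y xi))%:E)
   <= (a + b * (Num.sqrt k%:R * tau))%:E)%E.
Proof.
move=> k0 a0 b0 sigma0 sigma_tau.
have tau0 : 0 < tau by exact: le_lt_trans sigma_tau.
set t := Num.sqrt k%:R * tau.
have t0 : 0 < t by rewrite mulr_gt0 // sqrtr_gt0 ltr0n.
(* Cauchy-Schwarz through AM-GM with t = sqrt k * tau; taking tau > sigma rather
   than tau = sigma keeps t > 0 when sigma = 0. *)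
have amgm e : e <= t / 2 + e ^+ 2 / (2 * t).
  rewrite -subr_ge0 (_ : _ - e = (e - t) ^+ 2 / (2 * t)); last by field; rewrite gt_eqF.
  by rewrite divr_ge0 ?sqr_ge0 // mulr_ge0 // ltW.
pose a' := a + b * (t / 2); pose b' := b / (2 * t).
have a'0 : 0 <= a' by rewrite addr_ge0 // mulr_ge0 // divr_ge0 // ltW.
have b'0 : 0 <= b' by rewrite divr_ge0 // mulr_ge0 // ltW.
apply: le_trans (@iid_int_le _ _ _ P k _ (fun s =>
  (a' + b' * eucl (0 + \sum_(xi <- s) Y xi) ^+ 2)%:E) _ _) _.
- by move=> s; rewrite lee_fin addr_ge0 // mulr_ge0 // eucl_ge0.
- move=> s _; rewrite lee_fin add0r /a' /b' -addrA -mulrA -mulrDr lerD2l.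
  by rewrite ler_wpM2l // [(2 * t)^-1 * _]mulrC.
apply: le_trans (iid_int_sqr_eucl_sum_le _ _ a'0 b'0) _.
rewrite lee_fin eucl0 expr0n add0r /a' /b' -addrA -mulrA -mulrDr lerD2l.
have k_sigma : k%:R * sigma ^+ 2 <= t ^+ 2.
  by rewrite exprMn sqr_sqrtr // ler_wpM2l // lerXn2r // ?nnegrE // ltW.
have half_sum : t / 2 + (2 * t)^-1 * t ^+ 2 = t by field; rewrite gt_eqF.
by rewrite ler_wpM2l // -[leRHS]half_sum lerD2l ler_wpM2l // invr_ge0 mulr_ge0 // ltW.
Qed.

End CenteredNoise.

Definition halpern_beta (R : realType) (n : nat) : R := n%:R / n.+1%:R.

Section HalpernBeta.
Context (R : realType) (n : nat).
Local Notation beta := (halpern_beta R n).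

Lemma halpern_beta_ge0 : 0 <= beta.
Proof. by rewrite divr_ge0. Qed.

Lemma halpern_beta_le1 : beta <= 1.
Proof. by rewrite ler_pdivrMr ?ltr0Sn // mul1r ler_nat. Qed.

Lemma mulSn_halpern_beta : n.+1%:R * beta = n%:R.
Proof. by rewrite mulrC divfK // pnatr_eq0. Qed.

Lemma mulSn_1subr_halpern_beta : n.+1%:R * (1 - beta) = 1.
Proof. by rewrite mulrBr mulr1 mulSn_halpern_beta -natrB // subSnn. Qed.

End HalpernBeta.

Section HalpernIteration.
Context (R : realType) (d : nat) (nrm : 'rV[R]_d -> R) (mu gamma : R)
  (T : 'rV[R]_d -> 'rV[R]_d) (xs : 'rV[R]_d) (dX : measure_display)
  (Xi : measurableType dX) (D : 'rV[R]_d -> probability Xi R)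
  (Ttil : 'rV[R]_d -> Xi -> 'rV[R]_d) (sigma : R) (x0 : 'rV[R]_d)
  (k : nat -> nat) (N : nat).
Hypothesis nrm_norm : is_norm_Rd nrm.
Hypothesis nrm_le_eucl : forall x, nrm x <= mu * eucl x.
Hypothesis T_contraction : gamma_contraction nrm gamma T.
Hypothesis T_xs : T xs = xs.
Hypothesis Ttil_unbiased : forall x (i : 'I_d),
  (D x).-integrable setT (fun xi => (Ttil x xi ord0 i)%:E) /\
  (\int[D x]_xi (Ttil x xi ord0 i)%:E = (T x ord0 i)%:E)%E.
Hypothesis sigma_ge0 : 0 <= sigma.
Hypothesis Ttil_var : forall x,
  (\int[D x]_xi (eucl (Ttil x xi - T x) ^+ 2)%:E <= (sigma ^+ 2)%:E)%E.
Hypothesis k_ge : forall n, (0 < n)%N -> n%:R ^+ 2 * gamma ^+ (N - n) <= (k n)%:R.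

Local Notation beta := (halpern_beta R).
Local Notation update := (halpern_update Ttil x0 beta k).
Local Notation dist0 := (nrm (x0 - xs)).
Local Notation mup := (Num.max mu 0).

Let mup_ge0 : 0 <= mup.
Proof. by rewrite le_max lexx orbT. Qed.

Let nrm_le_mup x : nrm x <= mup * eucl x.
Proof.
by apply: le_trans (nrm_le_eucl x) _; rewrite ler_wpM2r ?eucl_ge0 // le_max lexx.
Qed.

Let gamma_gt0 : 0 < gamma.
Proof. by case: T_contraction => /andP[]. Qed.

Let gamma_ge0 : 0 <= gamma := ltW gamma_gt0.

Let k_gt0 n : (0 < n)%N -> (0 < k n)%N.
Proof.
move=> n0; rewrite -(ltr0n R); apply: lt_le_trans (k_ge n0).
by rewrite mulr_gt0 ?exprn_gt0 ?ltr0n.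
Qed.

Let oracle_noiseE x i :
  (fun xi => ((Ttil x xi - T x) ord0 i)%:E) =
  (fun xi => (Ttil x xi ord0 i)%:E - cst (T x ord0 i)%:E xi)%E.
Proof. by apply/funext => xi; rewrite !mxE. Qed.

Lemma oracle_noise_integrable x i :
  (D x).-integrable setT (fun xi => ((Ttil x xi - T x) ord0 i)%:E).
Proof.
rewrite oracle_noiseE; apply: integrableB => //; first exact: (Ttil_unbiased x i).1.
exact: finite_measure_integrable_cst.
Qed.

Lemma oracle_noise_mean0 x i :
  (\int[D x]_xi ((Ttil x xi - T x) ord0 i)%:E = 0)%E.
Proof.
rewrite oracle_noiseE integralB //; first last.
- exact: finite_measure_integrable_cst.
- exact: (Ttil_unbiased x i).1.
by rewrite (Ttil_unbiased x i).2 integral_cst //= probability_setT mule1 subee.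
Qed.

Lemma sum_oracle x (s : seq Xi) : \sum_(xi <- s) Ttil x xi =
  \sum_(xi <- s) (Ttil x xi - T x) + (size s)%:R *: T x.
Proof. by rewrite sumrB big_const_seq count_predT iter_addr_0 scaler_nat subrK. Qed.

Lemma halpern_update_sub_le n x (s : seq Xi) : (0 < n)%N -> size s = k n ->
  nrm (update n x s - xs) <= (1 - beta n) * dist0 + beta n * gamma * nrm (x - xs)
    + beta n / (k n)%:R * mup * eucl (\sum_(xi <- s) (Ttil x xi - T x)).
Proof.
move=> n0 size_s.
have kn0 : (k n)%:R != 0 :> R by rewrite pnatr_eq0 -lt0n k_gt0.
have b0 := halpern_beta_ge0 R n; have b1 := halpern_beta_le1 R n.
have -> : update n x s - xs = (1 - beta n) *: (x0 - xs) + beta n *: (T x - T xs)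
    + (beta n / (k n)%:R) *: \sum_(xi <- s) (Ttil x xi - T x).
  rewrite /halpern_update sum_oracle size_s T_xs; apply/rowP => i; rewrite !mxE.
  by field.
apply: le_trans (nrmD nrm_norm _ _) _; apply: lerD; last first.
  rewrite nrmZ // ger0_norm ?divr_ge0 // -mulrA.
  by rewrite ler_wpM2l ?divr_ge0.
apply: le_trans (nrmD nrm_norm _ _) _.
rewrite !nrmZ // !ger0_norm ?subr_ge0 // lerD2l -mulrA ler_wpM2l //.
by case: T_contraction => _; apply.
Qed.

Lemma iid_int_halpern_update_le n x (a b tau : R) :
  (0 < n)%N -> 0 <= a -> 0 <= b -> sigma < tau ->
  (iid_int (D x) (k n) (fun s => (a + b * nrm (update n x s - xs))%:E)
   <= (a + b * ((1 - beta n) * dist0 + beta n * gamma * nrm (x - xs)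
                + beta n * mup * tau / Num.sqrt (k n)%:R))%:E)%E.
Proof.
move=> n0 a0 b0 sigma_lt_tau.
have b0n := halpern_beta_ge0 R n; have b1n := halpern_beta_le1 R n.
have kn0 : 0 < (k n)%:R :> R by rewrite ltr0n k_gt0.
set c := (1 - beta n) * dist0 + beta n * gamma * nrm (x - xs).
have c0 : 0 <= c.
  by rewrite addr_ge0 ?mulr_ge0 ?subr_ge0 ?(nrm_ge0 nrm_norm).
set q := beta n / (k n)%:R * mup.
have q0 : 0 <= q by rewrite mulr_ge0 ?divr_ge0 // ltW.
apply: le_trans (@iid_int_le _ _ _ _ _ _ (fun s =>
  (a + b * c + b * q * eucl (\sum_(xi <- s) (Ttil x xi - T x)))%:E) _ _) _.
- by move=> s; rewrite lee_fin addr_ge0 // mulr_ge0 // nrm_ge0.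
- move=> s size_s; rewrite lee_fin -[leRHS]addrA -[b * q * _]mulrA -mulrDr.
  rewrite lerD2l ler_wpM2l //.
  exact: halpern_update_sub_le.
have ab0 : 0 <= a + b * c by rewrite addr_ge0 // mulr_ge0.
apply: le_trans (iid_int_eucl_sum_le (oracle_noise_integrable x)
  (oracle_noise_mean0 x) (Ttil_var x) (k_gt0 n0) ab0 (mulr_ge0 b0 q0)
  sigma_ge0 sigma_lt_tau) _.
set r := Num.sqrt (k n)%:R.
have r0 : r != 0 by rewrite gt_eqF // sqrtr_gt0.
have -> : b * q * (r * tau) = b * (beta n * mup * tau / r).
  by rewrite /q -[(k n)%:R]sqr_sqrtr ?ler0n // -/r; field.
by rewrite -addrA -mulrDr.
Qed.

Local Notation expect_err :=
  (halpern_expect D Ttil x0 beta k (fun x => (nrm (x - xs))%:E)).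

Lemma halpern_expect_ge0 m n x : (0 <= expect_err m n x)%E.
Proof.
elim: m n x => [|m IH] n x /=; first by rewrite lee_fin nrm_ge0.
by apply: iid_int_ge0 => s; exact: IH.
Qed.

Lemma noise_weight_le n : (0 < n)%N ->
  gamma ^+ (N - n) * n%:R / Num.sqrt (k n)%:R <= Num.sqrt gamma ^+ (N - n).
Proof.
move=> n0; set j := (N - n)%N; set g := Num.sqrt gamma.
have g_sq : g ^+ 2 = gamma by rewrite sqr_sqrtr.
have g_gt0 : 0 < g by rewrite sqrtr_gt0; case: T_contraction => /andP[].
have ngj_gt0 : 0 < n%:R * g ^+ j by rewrite mulr_gt0 ?ltr0n ?exprn_gt0.
have ngj_le : n%:R * g ^+ j <= Num.sqrt (k n)%:R.
  rewrite -(ger0_norm (ltW ngj_gt0)) -sqrtr_sqr ler_sqrt // exprMn.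
  by rewrite -exprM mulnC exprM g_sq k_ge.
rewrite ler_pdivrMr; last exact: lt_le_trans ngj_le.
apply: le_trans (ler_wpM2l (exprn_ge0 j (ltW g_gt0)) ngj_le).
by rewrite mulrCA -expr2 -exprM mulnC exprM g_sq mulrC.
Qed.

Let halpern_bound tau m n r := (dist0 * \sum_(i < m) gamma ^+ i
  + mup * tau * \sum_(i < m) Num.sqrt gamma ^+ i) / N.+1%:R
  + gamma ^+ m * n%:R / N.+1%:R * r.

Lemma halpern_expect_le tau m n x : sigma < tau -> (n + m)%N = N.+1 -> (0 < n)%N ->
  (expect_err m n x <= (halpern_bound tau m n (nrm (x - xs)))%:E)%E.
Proof.
move=> sigma_lt_tau; elim: m n x => [|m IH] n x nm n0.
  rewrite /= /halpern_bound !big_ord0 !mulr0 addr0 mul0r add0r expr0 mul1r.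
  by rewrite -nm addn0 divff ?mul1r // pnatr_eq0 -lt0n.
have tau_ge0 : 0 <= tau by exact: ltW (le_lt_trans sigma_ge0 sigma_lt_tau).
rewrite /=; apply: le_trans (@iid_int_le _ _ _ _ _ _
  (fun s => (halpern_bound tau m n.+1 (nrm (update n x s - xs)))%:E) _ _) _.
- by move=> s; exact: halpern_expect_ge0.
- by move=> s _; apply: IH; rewrite ?addSnnS.
apply: le_trans (@iid_int_halpern_update_le n x _ _ tau n0 _ _ sigma_lt_tau) _.
- have sum_ge0 (q : R) : 0 <= q -> 0 <= \sum_(i < m) q ^+ i.
    by move=> q0; rewrite sumr_ge0 // => i _; rewrite exprn_ge0.
  by rewrite divr_ge0 // addr_ge0 // !mulr_ge0 ?nrm_ge0 ?sum_ge0 ?sqrtr_ge0.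
- by rewrite divr_ge0 // mulr_ge0 // exprn_ge0.
have mN : (N - n)%N = m by move: nm; rewrite addnS => -[<-]; rewrite addKn.
have noise := noise_weight_le n0; rewrite mN in noise.
rewrite lee_fin /halpern_bound !big_ord_recr /=.
rewrite (_ : gamma ^+ m * n.+1%:R / N.+1%:R * _ =
  (gamma ^+ m * (n.+1%:R * (1 - beta n)) * dist0
   + gamma ^+ m.+1 * (n.+1%:R * beta n) * nrm (x - xs)
   + mup * tau * (gamma ^+ m * (n.+1%:R * beta n) / Num.sqrt (k n)%:R))
  / N.+1%:R); last by rewrite exprS; ring.
rewrite mulSn_halpern_beta mulSn_1subr_halpern_beta mulr1.
rewrite [leRHS](_ : _ = (dist0 * \sum_(i < m) gamma ^+ i
    + mup * tau * \sum_(i < m) Num.sqrt gamma ^+ i) / N.+1%:R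
  + (gamma ^+ m * dist0 + gamma ^+ m.+1 * n%:R * nrm (x - xs)
    + mup * tau * Num.sqrt gamma ^+ m) / N.+1%:R); last by ring.
by rewrite lerD2l ler_wpM2r // lerD2l ler_wpM2l // mulr_ge0.
Qed.

Let halpern_expect_N_le tau : sigma < tau ->
  (expect_err N 1 x0 <= ((dist0 + 2 * mup * tau) / (N.+1%:R * (1 - gamma)))%:E)%E.
Proof.
move=> sigma_lt_tau.
apply: le_trans (@halpern_expect_le tau N 1 x0 sigma_lt_tau (add1n N) isT) _.
have [/andP[_ gamma_lt1] _] := T_contraction.
have gamma01 : 0 <= gamma < 1 by rewrite gamma_ge0.
have tau_ge0 : 0 <= tau by exact: ltW (le_lt_trans sigma_ge0 sigma_lt_tau).
rewrite lee_fin /halpern_bound.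
rewrite (_ : _ + _ = (dist0 * \sum_(i < N.+1) gamma ^+ i
    + mup * tau * \sum_(i < N) Num.sqrt gamma ^+ i) / N.+1%:R); last first.
  by rewrite big_ord_recr /=; ring.
rewrite [leRHS](_ : _ = (dist0 * (1 - gamma)^-1 + mup * tau * (2 / (1 - gamma)))
    / N.+1%:R); last first.
  by field; have := ler0n R N; rewrite !gt_eqF //; lra.
rewrite ler_pM2r ?invr_gt0 // lerD // ler_wpM2l ?nrm_ge0 ?mulr_ge0 //.
  exact: sum_expr_le.
exact: sum_sqrt_expr_le.
Qed.

Lemma halpern_expect_rate :
  (expect_err N 1 x0 <= ((dist0 + 2 * mup * sigma) / (N.+1%:R * (1 - gamma)))%:E)%E.
Proof.
have [/andP[_ gamma_lt1] _] := T_contraction.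
apply: lee_affine_right_limit.
- by rewrite mulr_ge0.
- by rewrite mulr_gt0 // subr_gt0.
- exact: halpern_expect_N_le.
Qed.

End HalpernIteration.

Lemma sum_ceil_nat_sqr_expr_le (R : realType) (q : R) N : 0 <= q < 1 ->
  (\sum_(1 <= n < N.+1) ceil_nat (n%:R ^+ 2 * q ^+ (N - n)))%:R
    <= N%:R ^+ 2 / (1 - q) + N%:R :> R.
Proof.
move=> q01; have [q0 _] := andP q01; rewrite natr_sum.
apply: (@le_trans _ _ (\sum_(1 <= n < N.+1) (N%:R ^+ 2 * q ^+ (N - n) + 1))).
  apply: ler_sum_nat => n /andP[_ nN].
  apply: le_trans (ltW (ceil_nat_lt _)) _; first by rewrite mulr_ge0 ?exprn_ge0.
  by rewrite lerD2r ler_wpM2r ?exprn_ge0 // lerXn2r ?nnegrE // ler_nat -ltnS.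
rewrite big_split /= sumr_const_nat subn1 -mulr_sumr lerD2r ler_wpM2l ?sqr_ge0 //.
have -> : \sum_(1 <= n < N.+1) q ^+ (N - n) = \sum_(i < N) q ^+ i.
  rewrite big_add1 /= big_nat_rev /= big_mkord; apply: eq_bigr => i _.
  by rewrite add0n subnSK // subKn // ltnW.
exact: sum_expr_le.
Qed.

Lemma halpern_queries_le (R : realType) (q S eps : R) N :
  0 <= q < 1 -> 0 < eps -> eps * (1 - q) <= S ->
  N = ceil_nat (S / (eps * (1 - q))) ->
  (\sum_(1 <= n < N.+1) ceil_nat (n%:R ^+ 2 * q ^+ (N - n)))%:R
    <= 6 * S ^+ 2 / (eps ^+ 2 * (1 - q) ^+ 3) :> R.
Proof.
move=> q01 eps0 S_ge NE; have [q0 q1] := andP q01.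
have c0 : 0 < eps * (1 - q) by rewrite mulr_gt0 // subr_gt0.
set X := S / (eps * (1 - q)).
have X1 : 1 <= X by rewrite /X ler_pdivlMr // mul1r.
have NX : N%:R <= 2 * X by have := ceil_nat_lt (le_trans ler01 X1); rewrite -NE; lra.
apply: le_trans (sum_ceil_nat_sqr_expr_le N q01) _.
rewrite (_ : 6 * _ / _ = 4 * X ^+ 2 / (1 - q) + 2 * X ^+ 2 / (1 - q)); last first.
  by rewrite /X; field; rewrite !gt_eqF // subr_gt0.
have inv_ge1 : 1 <= (1 - q)^-1 by rewrite invf_ge1 ?subr_gt0 //; lra.
apply: lerD.
  rewrite ler_wpM2r ?invr_ge0 ?subr_ge0 ?(ltW q1) // (_ : 4 * _ = (2 * X) ^+ 2).
    by rewrite lerXn2r ?nnegrE //; lra.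
  by ring.
have X_le : X <= X ^+ 2 by rewrite expr2 ler_peMl // (le_trans ler01 X1).
apply: le_trans NX _; apply: (@le_trans _ _ (2 * X ^+ 2)); first by rewrite ler_wpM2l.
by rewrite ler_peMr // mulr_ge0 ?sqr_ge0.
Qed.

Theorem corollary2 :
  exists C : nat,
  forall (R : realType) (d : nat) (nrm : 'rV[R]_d -> R) (mu : R)
    (gamma : R) (T : 'rV[R]_d -> 'rV[R]_d) (xs : 'rV[R]_d)
    (dX : measure_display) (Xi : measurableType dX)
    (D : 'rV[R]_d -> probability Xi R) (Ttil : 'rV[R]_d -> Xi -> 'rV[R]_d)
    (sigma eps : R) (x0 : 'rV[R]_d),
  is_norm_Rd nrm ->
  (forall x, nrm x <= mu * eucl x) ->
  gamma_contraction nrm gamma T ->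
  T xs = xs ->
  (* measurability of the oracle: x |-> D_x is a (Borel) probability kernel
     and (x, xi) |-> Ttil x xi is jointly measurable *)
  (forall A : set Xi, measurable A ->
     measurable_fun setT (fun t : d.-tuple R => D (rV_of_tup t) A : \bar R)) ->
  measurable_fun setT
    (fun p : d.-tuple R * Xi => tup_of_rV (Ttil (rV_of_tup p.1) p.2)) ->
  (* unbiasedness: E_{xi ~ D_x} Ttil(x, xi) = T x (coordinatewise) *)
  (forall x (i : 'I_d),
     (D x).-integrable setT (fun xi => (Ttil x xi ord0 i)%:E) /\
     (\int[D x]_xi (Ttil x xi ord0 i)%:E = (T x ord0 i)%:E)%E) ->
  (* bounded variance: sup_x E ||Ttil(x, xi) - T x||_2^2 <= sigma^2 *)
  0 <= sigma ->
  (forall x, (\int[D x]_xi (eucl (Ttil x xi - T x) ^+ 2)%:E <= (sigma ^+ 2)%:E)%E) ->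
  0 < eps ->
  let N := ceil_nat ((nrm (x0 - xs) + 2 * mu * sigma) / (eps * (1 - gamma))) in
  let beta := fun n : nat => n%:R / n.+1%:R in
  let k := fun n : nat => ceil_nat (n%:R ^+ 2 * gamma ^+ (N - n)) in
  (halpern_expect D Ttil x0 beta k (fun x => (nrm (x - xs))%:E) N 1 x0
     <= eps%:E)%E /\
  (eps * (1 - gamma) <= nrm (x0 - xs) + 2 * mu * sigma ->
   (\sum_(1 <= n < N.+1) k n)%:R
     <= C%:R * ((nrm (x0 - xs) ^+ 2 + mu ^+ 2 * sigma ^+ 2)
                / (eps ^+ 2 * (1 - gamma) ^+ 3))).
Proof.
exists 30%N => R d nrm mu gamma T xs dX Xi D Ttil sigma eps x0 nrm_norm
  nrm_le_eucl T_contraction T_xs _ _ Ttil_unbiased sigma_ge0 Ttil_var eps_gt0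
  N beta k.
have [/andP[gamma_gt0 gamma_lt1] _] := T_contraction.
have c_gt0 : 0 < eps * (1 - gamma) by rewrite mulr_gt0 // subr_gt0.
set S := nrm (x0 - xs) + 2 * mu * sigma.
split.
  have k_ge n : (0 < n)%N -> n%:R ^+ 2 * gamma ^+ (N - n) <= (k n)%:R.
    by move=> _; exact: ceil_nat_ge.
  have := halpern_expect_rate x0 nrm_norm nrm_le_eucl T_contraction T_xs
    Ttil_unbiased sigma_ge0 Ttil_var k_ge.
  rewrite /halpern_beta -/beta => /le_trans; apply.
  have S_le : nrm (x0 - xs) + 2 * Num.max mu 0 * sigma <= eps * (1 - gamma) * N%:R.
    have [_|mu_lt0] := leP 0 mu; first exact: le_mul_ceil_nat.
    have r_le0 : nrm (x0 - xs) <= 0.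
      by apply: le_trans (nrm_le_eucl _) _; rewrite mulr_le0_ge0 ?eucl_ge0 // ltW.
    by rewrite mulr0 mul0r addr0 (le_trans r_le0) // mulr_ge0 // ltW.
  rewrite lee_fin ler_pdivrMr ?mulr_gt0 ?subr_gt0 //; apply: le_trans S_le _.
  by rewrite [N.+1%:R * _]mulrC mulrA ler_wpM2l ?ler_nat // ltW.
move=> S_ge; apply: le_trans (halpern_queries_le _ eps_gt0 S_ge erefl) _.
  by rewrite ltW.
have S_sqr : S ^+ 2 <= 5 * (nrm (x0 - xs) ^+ 2 + mu ^+ 2 * sigma ^+ 2).
  rewrite -subr_ge0 (_ : _ - _ = (2 * nrm (x0 - xs) - mu * sigma) ^+ 2) ?sqr_ge0 //.
  by rewrite /S; ring.
rewrite [leRHS](_ : _ = 6 * (5 * (nrm (x0 - xs) ^+ 2 + mu ^+ 2 * sigma ^+ 2))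
  / (eps ^+ 2 * (1 - gamma) ^+ 3)); last by ring.
by rewrite ler_wpM2r ?ler_wpM2l // invr_ge0 mulr_ge0 ?exprn_ge0 ?subr_ge0 ?ltW.
Qed.
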